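(* Consider a triadic majority rule round among participants $x,y,z$ (nodes of a median graph), started from any state of the round (any current winner and any proposer). Suppose $y$ and $z$ follow truthful bargaining while $x$ follows an arbitrary (possibly history-dependent) strategy. Then either the round never ends, or $m(x,y,z)$ lies on a shortest path between $x$ and the winner $\hat w$ of the round.
   Context: $G$ is a finite connected unweighted undirected median graph: with shortest-path distance $d$ and $I_{ab}=\{v:d(a,v)+d(v,b)=d(a,b)\}$, $\lvert I_{ab}\cap I_{ac}\cap I_{bc}\rvert=1$ for all $a,b,c$, and $m(a,b,c)$ is that node. Triadic majority rule round: there is a current winner and a proposer. In each step the proposer proposes a node or a motion to end; all three vote simultaneously to accept or reject. An accepted alternative becomes the current winner. If the vote is unanimous the proposer stays; otherwise the participant in the minority becomes proposer. If a motion to end is accepted by majority, the round ends with winner the current winner. Truthful bargaining for $u$ with current winner $w$: $P_u=I_{uw}\setminus\{w\}$, $B_u=(P_u\cap P_{u'})\cup(P_u\cap P_{u''})$ ($u',u''$ the other members); $u$ proposes a point of $B_u$ closest to $u$ if $B_u\neq\emptyset$ and a motion to end otherwise; accepts an alternative $a$ iff $d(u,a)<d(u,w)$; accepts a motion to end iff $B_u=\emptyset$; ties broken arbitrarily. *)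

From mathcomp Require Import all_boot.
Set Implicit Arguments. Unset Strict Implicit. Unset Printing Implicit Defensive.

Section Graph.
Variables (T : finType) (e : rel T).

Fixpoint reachn (n : nat) (x y : T) : bool :=
  match n with
  | 0 => x == y
  | n'.+1 => [exists z, e x z && reachn n' z y]
  end.

(* shortest-path distance (correct for connected graphs, where every
   distance is < #|T|) *)
Definition dist (x y : T) : nat := find (fun n => reachn n x y) (iota 0 #|T|).

Definition interval (a b : T) : {set T} :=
  [set v | dist a v + dist v b == dist a b].

Definition simple_graph : Prop := symmetric e /\ irreflexive e.
Definition connected_graph : Prop := forall x y : T, connect e x y.
Definition median_graph : Prop :=
  simple_graph /\ connected_graph /\
  forall a b c : T, #|interval a b :&: interval a c :&: interval b c| = 1.

Definition median (a b c : T) : T :=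
  odflt a [pick v in interval a b :&: interval a c :&: interval b c].

Variable pos : 'I_3 -> T.

(* a proposal: Some a = propose node a, None = motion to end *)
Definition proposal := option T.
(* a state: (current winner, current proposer) *)
Definition state := (T * 'I_3)%type.
(* a step: proposal, and the votes (true = accept) of all three players *)
Definition move := (proposal * ('I_3 -> bool))%type.

Definition accepted (v : 'I_3 -> bool) : bool := 2 <= #|[set i | v i]|.
Definition unanimous (v : 'I_3 -> bool) : bool := [forall i, forall j, v i == v j].

Definition next_state (s : state) (m : move) : state :=
  let w' := if m.1 is Some a then (if accepted m.2 then a else s.1) else s.1 in
  let p' := if unanimous m.2 then s.2
            else odflt s.2 [pick i | m.2 i != accepted m.2] in
  (w', p').

Definition end_accepted (m : move) : bool := (m.1 == None) && accepted m.2.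

Definition Pset (u : 'I_3) (w : T) : {set T} := interval (pos u) w :\ w.
Definition Bset (u : 'I_3) (w : T) : {set T} :=
  [set a in Pset u w | [exists v, (v != u) && (a \in Pset v w)]].

Definition truthful_proposal (u : 'I_3) (w : T) (pr : proposal) : Prop :=
  if Bset u w == set0 then pr = None
  else exists2 b, pr = Some b &
       b \in Bset u w /\ forall c, c \in Bset u w -> dist (pos u) b <= dist (pos u) c.

Definition truthful_vote (u : 'I_3) (w : T) (pr : proposal) : bool :=
  if pr is Some a then dist (pos u) a < dist (pos u) w else Bset u w == set0.

Definition truthful_at (u : 'I_3) (s : state) (m : move) : Prop :=
  (s.2 = u -> truthful_proposal u s.1 m.1) /\ m.2 u = truthful_vote u s.1 m.1.

(* players 1 (y) and 2 (z) are truthful; player 0 (x) is unconstrained *)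
Definition conforming (s : state) (m : move) : Prop :=
  forall u : 'I_3, u != ord0 -> truthful_at u s m.

(* ends_with s ms wf : the sequence of moves ms, played from state s,
   is a (finite) play of the round in which y and z bargain truthfully,
   the round ends at its last move, and the winner is wf *)
Fixpoint ends_with (s : state) (ms : seq move) (wf : T) : Prop :=
  match ms with
  | [::] => False
  | m :: ms' =>
      conforming s m /\
      (if end_accepted m then ms' = [::] /\ wf = s.1
       else ends_with (next_state s m) ms' wf)
  end.

End Graph.

From mathcomp Require Import all_boot.
From mathcomp Require Import zify.

Set Implicit Arguments.
Unset Strict Implicit.
Unset Printing Implicit Defensive.

(* The round can only end by a majority accepting a motion to end, and since x
   is a single vote, one of the truthful players y, z accepts it; say y, so
   B_y is empty: I(y,w) meets I(x,w) and I(z,w) only in the final winner w.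
   Applying the median axiom to (x,y,w) and (y,z,w) puts w on a geodesic from
   x to y and on one from y to z, and then m(x,z,w) satisfies the distance
   equations of m(x,y,z); hence m(x,y,z) = m(x,z,w) lies between x and w. *)

Section Distance.
Variables (T : finType) (e : rel T).
Hypothesis e_sym : symmetric e.
Hypothesis e_conn : connected_graph e.

Lemma reachnD n m x y z :
  reachn e n x y -> reachn e m y z -> reachn e (n + m) x z.
Proof.
elim: n x => [|n IH] x /=; first by move/eqP->.
case/existsP=> x' /andP[ex rx] ry; apply/existsP; exists x'.
by rewrite ex (IH _ rx ry).
Qed.

Lemma reachn_sym n x y : reachn e n x y -> reachn e n y x.
Proof.
elim: n x y => [|n IH] x y; first by rewrite /= eq_sym.
case/existsP=> x' /andP[ex rx]; rewrite -addn1; apply: reachnD (IH _ _ rx) _.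
by apply/existsP; exists x; rewrite /= e_sym ex eqxx.
Qed.

Lemma reachn_path x p : path e x p -> reachn e (size p) x (last x p).
Proof.
elim: p x => [|a p IH] x /=; first by rewrite eqxx.
by case/andP=> ex pp; apply/existsP; exists a; rewrite ex IH.
Qed.

Lemma has_reachn x y : has (fun n => reachn e n x y) (iota 0 #|T|).
Proof.
have /connectP[p pp ->] := e_conn x y.
have [q pq uq _] := shortenP pp.
apply/hasP; exists (size q); last exact: reachn_path.
rewrite mem_iota add0n.
by have := max_card (mem (x :: q)); move/card_uniqP: uq => ->.
Qed.

Lemma dist_lt_card x y : dist e x y < #|T|.
Proof. by have := has_reachn x y; rewrite has_find size_iota. Qed.

Lemma reachn_dist x y : reachn e (dist e x y) x y.
Proof.
have := nth_find 0 (has_reachn x y).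
by rewrite nth_iota ?add0n // dist_lt_card.
Qed.

Lemma dist_min n x y : reachn e n x y -> n < #|T| -> dist e x y <= n.
Proof.
move=> r lt; rewrite leqNgt; apply/negP => lt_n_dist.
by have := before_find 0 lt_n_dist; rewrite nth_iota // add0n r.
Qed.

Lemma distC x y : dist e x y = dist e y x.
Proof.
by apply/eqP; rewrite eqn_leq !dist_min ?dist_lt_card // reachn_sym // reachn_dist.
Qed.

Lemma dist_triangle x y z : dist e x z <= dist e x y + dist e y z.
Proof.
have [lt|] := ltnP (dist e x y + dist e y z) #|T|.
  exact: dist_min (reachnD (reachn_dist x y) (reachn_dist y z)) lt.
by have := dist_lt_card x z; lia.
Qed.

End Distance.

Section Median.
Variables (T : finType) (e : rel T).
Hypothesis e_median : median_graph e.

Let e_sym : symmetric e. Proof. by case: e_median => [[]]. Qed.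
Let e_conn : connected_graph e. Proof. by case: e_median => _ []. Qed.

Let dC := distC e_sym e_conn.
Let dtri := dist_triangle e_conn.

Definition median_set (a b c : T) : {set T} :=
  interval e a b :&: interval e a c :&: interval e b c.

Lemma median_setE a b c v :
  (v \in median_set a b c) =
  [&& dist e a v + dist e v b == dist e a b,
      dist e a v + dist e v c == dist e a c
    & dist e b v + dist e v c == dist e b c].
Proof. by rewrite !inE andbA. Qed.

Lemma median_set1 a b c : median_set a b c = [set median e a b c].
Proof.
case: e_median => _ [_ /(_ a b c) /eqP/cards1P[m def_m]].
rewrite /median_set def_m /median def_m.
by case: pickP => [v|/(_ m)]; rewrite !inE ?eqxx // => /eqP->.
Qed.

Lemma median_setP a b c v :
  reflect (median e a b c = v) (v \in median_set a b c).
Proof. by rewrite median_set1 inE eq_sym; apply: eqP. Qed.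

Lemma median_in_set a b c : median e a b c \in median_set a b c.
Proof. by rewrite median_set1 set11. Qed.

Lemma median_swap a b c : median e a c b = median e a b c.
Proof.
apply/median_setP; have := median_in_set a b c.
rewrite !median_setE; set m := median e a b c; clearbody m.
have := dC c m; have := dC m b; have := dC c b.
by move=> ? ? ? /and3P[/eqP ? /eqP ? /eqP ?]; apply/and3P; split; apply/eqP; lia.
Qed.

Lemma interval_meet_median a b w :
  (forall v, v \in interval e a w -> v \in interval e b w -> v = w) ->
  w \in interval e a b.
Proof.
move=> meet_w; have := median_in_set a b w.
rewrite !in_setI -andbA => /and3P[m_ab m_aw m_bw].
by rewrite -(meet_w _ m_aw m_bw).
Qed.

Lemma median_in_interval_between a b c w :
  w \in interval e a b -> w \in interval e b c ->
  median e a b c \in interval e a w.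
Proof.
have := median_in_set a c w; rewrite median_setE.
set u := median e a c w => /and3P[/eqP u_ac /eqP u_aw /eqP u_cw].
rewrite !inE => /eqP w_ab /eqP w_bc.
suff -> : median e a b c = u by rewrite u_aw.
apply/median_setP; rewrite median_setE u_ac eqxx /=.
have := dtri a u b; have := dtri u w b; have := dtri b u c; have := dtri b w u.
have := dC c u; have := dC u w; have := dC c w; have := dC w b.
by clearbody u => *; apply/andP; split; apply/eqP; lia.
Qed.

End Median.

Section Round.
Variables (T : finType) (e : rel T) (pos : 'I_3 -> T).

Lemma Bset_eq0_interval_meet u u' w v :
  Bset e pos u w == set0 -> u' != u ->
  v \in interval e (pos u') w -> v \in interval e (pos u) w -> v = w.
Proof.
move=> /eqP B0 u'u v_u'w v_uw; apply/eqP/negPn/negP => vw.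
suff : v \in Bset e pos u w by rewrite B0 inE.
rewrite inE /Pset in_setD1 vw v_uw; apply/existsP; exists u'.
by rewrite u'u in_setD1 vw.
Qed.

Lemma median_in_interval_of_Bset_eq0 i j k w :
  median_graph e -> j != i -> j != k -> Bset e pos j w == set0 ->
  median e (pos i) (pos j) (pos k) \in interval e (pos i) w.
Proof.
move=> e_median ji jk B0.
apply: median_in_interval_between => //; apply: interval_meet_median => // v.
- by apply: Bset_eq0_interval_meet B0 _; rewrite eq_sym.
- by move=> v_jw v_kw; apply: Bset_eq0_interval_meet B0 _ v_kw v_jw; rewrite eq_sym.
Qed.

Lemma ord3P (i : 'I_3) : [\/ i = ord0, i = inord 1 | i = inord 2].
Proof.
by case: i => -[|[|[|//]]] lt3; [apply: Or31 | apply: Or32 | apply: Or33];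
  apply: val_inj; rewrite /= ?inordK.
Qed.

Lemma accepted_1_or_2 (v : 'I_3 -> bool) :
  accepted v -> v (inord 1) || v (inord 2).
Proof.
rewrite /accepted; apply: contraTT; rewrite negb_or -ltnNge => /andP[vy vz].
rewrite ltnS (leq_trans _ (eq_leq (cards1 (ord0 : 'I_3)))) //.
apply/subset_leq_card/subsetP => i.
by rewrite !inE; case: (ord3P i) => ->; rewrite ?eqxx // (negbTE vy, negbTE vz).
Qed.

Lemma end_accepted_Bset_eq0 s m :
  conforming e pos s m -> end_accepted m ->
  (Bset e pos (inord 1) s.1 == set0) || (Bset e pos (inord 2) s.1 == set0).
Proof.
move=> conf /andP[/eqP m_end acc].
have vote u : u != ord0 -> m.2 u = (Bset e pos u s.1 == set0).
  by move=> u0; have [_ ->] := conf u u0; rewrite m_end.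
by have := accepted_1_or_2 acc; rewrite !vote // -val_eqE /= inordK.
Qed.

Lemma ends_with_last s ms wf :
  ends_with e pos s ms wf ->
  exists s' m, [/\ conforming e pos s' m, end_accepted m & wf = s'.1].
Proof.
elim: ms s => [|m ms IH] s //= [conf].
by case: ifP => [m_end [_ ->] | _ /IH //]; exists s, m.
Qed.

End Round.

Theorem lemmaI8 (T : finType) (e : rel T) (pos : 'I_3 -> T)
    (s0 : state T) (ms : seq (move T)) (wf : T) :
  median_graph e ->
  ends_with e pos s0 ms wf ->
  median e (pos ord0) (pos (inord 1)) (pos (inord 2))
    \in interval e (pos ord0) wf.
Proof.
move=> e_median /ends_with_last[s [m [conf m_end ->]]].
have [y0 z0 yz] : [/\ inord 1 != ord0 :> 'I_3, inord 2 != ord0 :> 'I_3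
                    & inord 1 != inord 2 :> 'I_3].
  by rewrite -!val_eqE /= !inordK.
case/orP: (end_accepted_Bset_eq0 conf m_end) => B0.
  exact: median_in_interval_of_Bset_eq0 e_median y0 yz B0.
rewrite -median_swap //.
by apply: median_in_interval_of_Bset_eq0 e_median z0 _ B0; rewrite eq_sym.
Qed.
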